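(* $A\in \kappa\mathbf{CH}$ if and only if $\mathcal{BL}_\kappa(\mathrm{p}\mathcal{H} A) = A$.
   Context: Let $A$ be a meet-semilattice (in the paper, a bounded distributive lattice) and $\kappa$ a regular cardinal. A $\kappa$-join is a join of a set of cardinality $<\kappa$; $A$ is $\kappa$-complete if all $\kappa$-joins exist. $\kappa\mathbf{CH}$ is the class of $\kappa$-complete Heyting lattices. A join $\bigvee S$ existing in $A$ is distributive if $a\wedge\bigvee S=\bigvee\{a\wedge s: s\in S\}$ for all $a\in A$; $A$ is a $\kappa$-frame if it is $\kappa$-complete and every $\kappa$-join is distributive. $\mathcal{BL} A$ (the Bruns-Lakser completion) is the frame of D-ideals of $A$ (downsets closed under distributive joins of their subsets), with $A$ identified with its principal downsets. A relative annihilator of $A$ is $\langle a,b\rangle=\{x\in A: a\wedge x\le b\}$. The proHeyting extension $\mathrm{p}\mathcal{H} A$ is the bounded sublattice of $\mathcal{BL} A$ generated by the relative annihilators of $A$; one has $A\subseteq\mathrm{p}\mathcal{H} A\subseteq\mathcal{BL} A$ and $\mathcal{BL}(\mathrm{p}\mathcal{H} A)$ is identified with $\mathcal{BL} A$. For a meet-semilattice $B$ with $A\le B\le\mathcal{BL} A$, $\mathcal{BL}_\kappa B$ denotes the sub-$\kappa$-frame of $\mathcal{BL} A=\mathcal{BL} B$ generated by $B$. *)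

From HB Require Import structures.
From mathcomp Require Import all_boot all_order.
Set Implicit Arguments. Unset Strict Implicit. Unset Printing Implicit Defensive.
Import Order.TTheory.
Local Open Scope order_scope.

(* The regular cardinal kappa is represented by a type K : kappa = |K|.
   "X has cardinality < kappa" means: no injection K -> X (classically,
   by cardinal comparability, this is |X| < |K|). *)
Definition lt_card (K X : Type) : Prop := ~ exists f : K -> X, injective f.

Definition regular_cardinal (K : Type) : Prop :=
  (exists f : nat -> K, injective f) /\
  forall (I : Type) (F : I -> Type),
    lt_card K I -> (forall i, lt_card K (F i)) -> lt_card K {i : I & F i}.

Section Lat.
Context {disp : Order.disp_t} {L : tbDistrLatticeType disp}.

Definition is_join (S : L -> Prop) (j : L) : Prop :=
  (forall s, S s -> s <= j) /\ (forall u, (forall s, S s -> s <= u) -> j <= u).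

Definition kappa_complete (K : Type) : Prop :=
  forall S : L -> Prop, lt_card K {x : L | S x} -> exists j, is_join S j.

Definition heyting : Prop :=
  forall a b : L, exists c : L, forall x : L, x <= c <-> a `&` x <= b.

Definition kCH (K : Type) : Prop := kappa_complete K /\ heyting.

Definition distributive_join (S : L -> Prop) (j : L) : Prop :=
  is_join S j /\
  forall a : L, is_join (fun y => exists s, S s /\ y = a `&` s) (a `&` j).

Definition down_set (I : L -> Prop) : Prop :=
  forall x y : L, y <= x -> I x -> I y.

(* D-ideals: the elements of the Bruns-Lakser completion BL L *)
Definition D_ideal (I : L -> Prop) : Prop :=
  down_set I /\
  forall (S : L -> Prop) (j : L),
    (forall s, S s -> I s) -> distributive_join S j -> I j.

Definition rel_ann (a b : L) : L -> Prop := fun x => a `&` x <= b.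

Definition BL_join (Ix : Type) (G : Ix -> L -> Prop) : L -> Prop :=
  fun x => forall I, D_ideal I -> (forall i y, G i y -> I y) -> I x.

Definition BL_top : L -> Prop := fun _ => True.
Definition BL_meet (I J : L -> Prop) : L -> Prop := fun x => I x /\ J x.
Definition BL_bot : L -> Prop := BL_join (fun e : Empty_set => match e with end).
Definition BL_join2 (I J : L -> Prop) : L -> Prop :=
  BL_join (fun b : bool => if b then I else J).

(* families of elements of BL L, taken up to extensional equality of sets *)
Definition ext_closed (S : (L -> Prop) -> Prop) : Prop :=
  forall I J, S I -> (forall x, I x <-> J x) -> S J.

Definition bsublattice_closed (S : (L -> Prop) -> Prop) : Prop :=
  [/\ ext_closed S, S BL_top, S BL_bot,
      (forall I J, S I -> S J -> S (BL_meet I J)) &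
      (forall I J, S I -> S J -> S (BL_join2 I J))].

Definition pH (I : L -> Prop) : Prop :=
  forall S, bsublattice_closed S -> (forall a b, S (rel_ann a b)) -> S I.

Definition kframe_closed (K : Type) (S : (L -> Prop) -> Prop) : Prop :=
  [/\ ext_closed S, S BL_top,
      (forall I J, S I -> S J -> S (BL_meet I J)) &
      (forall (Ix : Type) (G : Ix -> L -> Prop),
          lt_card K Ix -> (forall i, S (G i)) -> S (BL_join G))].

Definition BLk (K : Type) (B : (L -> Prop) -> Prop) (I : L -> Prop) : Prop :=
  forall S, kframe_closed K S -> (forall J, B J -> S J) -> S I.

End Lat.

From mathcomp Require Import all_boot all_order.
From Stdlib Require Import ClassicalEpsilon ProofIrrelevance.
Set Implicit Arguments.
Unset Strict Implicit.
Unset Printing Implicit Defensive.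
Import Order.TTheory.
Local Open Scope order_scope.

(* If A is a kappa-complete Heyting lattice, every join in A is distributive,
   because a `&` - has a right adjoint. Hence the join in BL A of fewer than
   kappa principal ideals is the principal ideal of their join in A, and the
   principal ideals form a sub-kappa-frame of BL A; it contains pH A since
   <a, b> is the principal ideal of the relative pseudocomplement of a and b.
   So BL_kappa (pH A) consists of principal ideals, and it contains each
   principal ideal of a as <top, a>.
   Conversely, if BL_kappa (pH A) = A then <a, b> in pH A is principal, which
   gives relative pseudocomplements, and the join in BL A of the principal
   ideals of the elements of a set S of size < kappa is the principal ideal
   of some j, which is then the join of S in A. *)

Lemma lt_card_range (K I T : Type) (f : I -> T) :
  lt_card K I -> lt_card K {x : T | exists i, x = f i}.
Proof.
move=> hI [g g_inj]; apply: hI.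
pose pre k := proj1_sig (constructive_indefinite_description _ (proj2_sig (g k))).
have preP k : proj1_sig (g k) = f (pre k).
  by rewrite /pre; case: constructive_indefinite_description.
exists pre => k1 k2 e; apply: g_inj; apply: eq_sig_hprop.
  by move=> x; exact: proof_irrelevance.
by rewrite !preP e.
Qed.

Section BLk.
Context {disp : Order.disp_t} {A : tbDistrLatticeType disp}.
Implicit Types (I J : A -> Prop) (B : (A -> Prop) -> Prop).

Lemma BLk_base K B I : B I -> BLk K B I.
Proof. by move=> hI S _ hB; exact: hB. Qed.

Lemma BLk_ext K B I J : BLk K B I -> (forall x, I x <-> J x) -> BLk K B J.
Proof. by move=> hI hIJ S hS hB; case: (hS) => S_ext _ _ _; exact: S_ext (hI S hS hB) hIJ. Qed.

Lemma BLk_BL_join K B (Ix : Type) (G : Ix -> A -> Prop) :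
  lt_card K Ix -> (forall i, BLk K B (G i)) -> BLk K B (BL_join G).
Proof.
by move=> hIx hG S hS hB; case: (hS) => _ _ _ S_join; apply: S_join => // i; exact: hG.
Qed.

Lemma pH_rel_ann (a b : A) : pH (rel_ann a b).
Proof. by move=> S _ hS; exact: hS. Qed.

End BLk.

Section Principal.
Context {disp : Order.disp_t} {A : tbDistrLatticeType disp}.
Implicit Types (a b j : A) (I J : A -> Prop).

Definition principal a : A -> Prop := fun x => x <= a.

Definition is_principal I : Prop := exists a, forall x, I x <-> x <= a.

Lemma D_ideal_principal a : D_ideal (principal a).
Proof.
split; first by move=> x y hyx hx; exact: le_trans hyx hx.
by move=> S j hS [[_ lub] _]; exact: lub hS.
Qed.

Lemma rel_ann_top a x : rel_ann \top a x <-> x <= a.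
Proof. by rewrite /rel_ann meet1x. Qed.

Lemma BL_join_principal (Ix : Type) (G : Ix -> A -> Prop) (f : Ix -> A) j :
  (forall i x, G i x <-> x <= f i) ->
  distributive_join (fun x => exists i, x = f i) j ->
  forall x, BL_join G x <-> x <= j.
Proof.
move=> hG hj x; split.
- move=> hx; apply: hx (principal j) (D_ideal_principal j) _ => i y /hG hy.
  by apply: le_trans hy _; case: hj => [[ub _] _]; apply: ub; exists i.
- move=> hxj I [down_I closed_I] hI; apply: down_I hxj _.
  by apply: closed_I hj => s [i ->]; apply: (hI i); exact/hG.
Qed.

Lemma is_join_of_BL_join_principal (S : A -> Prop) j :
  (forall x, BL_join (fun p : {s | S s} => principal (proj1_sig p)) x <-> x <= j) ->
  is_join S j.
Proof.
move=> hj; split.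
- by move=> s hs; apply/hj => I _ hI; exact: (hI (exist _ s hs) s (le_refl s)).
- move=> u hu; have /hj/(_ (principal u) (D_ideal_principal u)) : j <= j by [].
  by apply=> -[s hs] y /= hy; apply: le_trans hy (hu s hs).
Qed.

Lemma distributive_join_empty (S : A -> Prop) :
  (forall x, ~ S x) -> distributive_join S \bot.
Proof.
move=> S0; split; first by split=> [s /S0 | u _] //; exact: le0x.
by move=> a; rewrite meetx0; split=> [y [s [/S0]]| u _] //; exact: le0x.
Qed.

Lemma is_join_pair (S : A -> Prop) a b :
  (forall x, S x <-> x = a \/ x = b) -> is_join S (a `|` b).
Proof.
move=> hS; split; first by move=> s /hS [->|->]; [exact: leUl | exact: leUr].
by move=> u hu; rewrite leUx (hu a) ?(hu b) //; apply/hS; [right | left].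
Qed.

Lemma distributive_join_pair a b :
  distributive_join (fun x => exists c : bool, x = if c then a else b) (a `|` b).
Proof.
split; first by apply: is_join_pair => x; split=> [[[] ->]|[->|->]];
  [left | right | exists true | exists false].
move=> d; rewrite meetUr; apply: is_join_pair => y; split.
- by move=> [s [[[] ->] ->]]; [left | right].
- by move=> [->|->]; [exists a; split; first exists true | exists b; split; first exists false].
Qed.

Lemma is_principal_ext : ext_closed is_principal.
Proof. by move=> I J [a ha] hIJ; exists a => x; rewrite -hIJ. Qed.

Lemma is_principal_BL_top : is_principal BL_top.
Proof. by exists \top => x; split=> // _; exact: lex1. Qed.

Lemma is_principal_BL_bot : is_principal BL_bot.
Proof.
exists \bot; apply: (@BL_join_principal _ _ (fun e : Empty_set => match e with end)).
  by case.
by apply: distributive_join_empty => x [[]].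
Qed.

Lemma is_principal_BL_meet I J :
  is_principal I -> is_principal J -> is_principal (BL_meet I J).
Proof.
move=> [a ha] [b hb]; exists (a `&` b) => x.
by rewrite /BL_meet lexI ha hb; split=> [[-> ->]|/andP].
Qed.

Lemma is_principal_BL_join2 I J :
  is_principal I -> is_principal J -> is_principal (BL_join2 I J).
Proof.
move=> [a ha] [b hb]; exists (a `|` b).
apply: (@BL_join_principal _ _ (fun c : bool => if c then a else b)).
  by case.
exact: distributive_join_pair.
Qed.

Section Heyting.
Hypothesis A_heyting : heyting (L := A).

Lemma heyting_distributive_join (S : A -> Prop) j :
  is_join S j -> distributive_join S j.
Proof.
move=> [ub lub]; split=> // a; split.
- by move=> y [s [hs ->]]; apply: leI2 => //; exact: ub.
- move=> u hu; have [c hc] := A_heyting a u.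
  by apply/hc; apply: lub => s hs; apply/hc; apply: hu; exists s.
Qed.

Lemma is_principal_rel_ann a b : is_principal (rel_ann a b).
Proof. by have [c hc] := A_heyting a b; exists c => x; rewrite hc. Qed.

Lemma pH_is_principal I : pH I -> is_principal I.
Proof.
apply; last exact: is_principal_rel_ann.
split; [exact: is_principal_ext | exact: is_principal_BL_top
  | exact: is_principal_BL_bot | exact: is_principal_BL_meet
  | exact: is_principal_BL_join2].
Qed.

Lemma kframe_closed_principal K :
  kappa_complete (L := A) K -> kframe_closed K is_principal.
Proof.
move=> A_complete; split; [exact: is_principal_ext | exact: is_principal_BL_top
  | exact: is_principal_BL_meet |].
move=> Ix G hIx hG.
pose f i := proj1_sig (constructive_indefinite_description _ (hG i)).
have hf i x : G i x <-> x <= f i.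
  by rewrite /f; case: constructive_indefinite_description.
have [j hj] := A_complete _ (lt_card_range (f := f) hIx).
by exists j; apply: BL_join_principal hf _; exact: heyting_distributive_join.
Qed.

End Heyting.

Lemma kCH_BLk_pH K I : kCH (L := A) K -> (BLk K pH I <-> is_principal I).
Proof.
move=> [A_complete A_heyting]; split.
- by apply; [exact: kframe_closed_principal | exact: pH_is_principal].
- move=> [a ha]; apply: BLk_ext (BLk_base (pH_rel_ann \top a)) _ => x.
  by rewrite ha rel_ann_top.
Qed.

Section PrincipalBLk.
Variable K : Type.
Hypothesis BLk_pH_principal : forall I, BLk K pH I <-> is_principal I.

Lemma heyting_of_BLk_pH_principal : heyting (L := A).
Proof.
move=> a b; have [c hc] := (BLk_pH_principal _).1 (BLk_base (pH_rel_ann a b)).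
by exists c => x; rewrite -hc.
Qed.

Lemma kappa_complete_of_BLk_pH_principal : kappa_complete (L := A) K.
Proof.
move=> S hS; pose G (p : {s | S s}) := principal (proj1_sig p).
have : BLk K pH (BL_join G).
  apply: BLk_BL_join hS _ => p; apply/BLk_pH_principal.
  by exists (proj1_sig p).
by move=> /BLk_pH_principal [j hj]; exists j; exact: is_join_of_BL_join_principal.
Qed.

End PrincipalBLk.

End Principal.

Theorem theorem4p19 (K : Type) (disp : Order.disp_t)
    (A : tbDistrLatticeType disp) :
  regular_cardinal K ->
  (kCH (L := A) K <->
   forall I : A -> Prop,
     BLk K (@pH disp A) I <-> exists a : A, forall x : A, I x <-> x <= a).
Proof.
move=> _; split; first by move=> A_kCH I; exact: kCH_BLk_pH.
move=> BLk_pH_principal; split.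
- exact: kappa_complete_of_BLk_pH_principal.
- exact: heyting_of_BLk_pH_principal.
Qed.
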